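(* For every integer $m\geq 2$ and every integer $n\geq 2$, the graph $mB_n$ (the disjoint union of $m$ copies of the book graph $B_n$) is $C_4$-supermagic.
   Context: All graphs are finite and simple. For a graph $H$, a graph $G=(V,E)$ has an $H$-covering if every edge of $G$ belongs to a subgraph of $G$ isomorphic to $H$. For such $G$, an $H$-magic labeling is a bijection $\lambda: V\cup E\to\{1,2,\dots,|V|+|E|\}$ for which there is a constant $c$ such that for every subgraph $H'=(V',E')$ of $G$ isomorphic to $H$, $\sum_{v\in V'}\lambda(v)+\sum_{e\in E'}\lambda(e)=c$. It is $H$-supermagic if moreover $\{\lambda(v):v\in V\}=\{1,\dots,|V|\}$; $G$ is $H$-supermagic if it admits such a labeling. $C_k$ is the cycle of length $k$. $mG$ denotes the disjoint union of $m$ copies of $G$. The book graph $B_n=K_{1,n}\times K_2$ has vertices $u_1,u_2,v_i,w_i$ ($1\le i\le n$) and edges $u_1u_2$, and $u_1w_i$, $u_2v_i$, $v_iw_i$ ($1\le i\le n$). *)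

From mathcomp Require Import all_boot.
Set Implicit Arguments. Unset Strict Implicit. Unset Printing Implicit Defensive.

(* A finite simple graph: a vertex finType T with a symmetric irreflexive
   adjacency relation e.  Edges are the 2-element sets {x,y} with e x y. *)
Definition edges (T : finType) (e : rel T) : {set {set T}} :=
  [set A : {set T} | [exists x, exists y, e x y && (A == [set x; y])]].

Definition iso_subgraph (TH : finType) (eH : rel TH) (T : finType) (e : rel T)
    (V' : {set T}) (E' : {set {set T}}) : Prop :=
  E' \subset edges e /\
  exists phi : TH -> T, injective phi /\ V' = phi @: [set: TH] /\
    E' = ((fun A : {set TH} => phi @: A) @: edges eH).

Definition H_covering (TH : finType) (eH : rel TH) (T : finType) (e : rel T) : Prop :=
  forall A, A \in edges e ->
    exists V' E', iso_subgraph eH e V' E' /\ A \in E'.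

(* An H-supermagic labeling, given by vertex labels lv and edge labels le:
   together a bijection V u E -> {1..|V|+|E|} (injective with values in that
   range, both sides having |V|+|E| elements), vertex labels exactly
   {1..|V|}, and constant total weight on all subgraphs isomorphic to H. *)
Definition H_supermagic_labeling (TH : finType) (eH : rel TH) (T : finType) (e : rel T)
    (lv : T -> nat) (le : {set T} -> nat) : Prop :=
  let N := #|T| + #|edges e| in
  injective lv /\
  {in edges e &, injective le} /\
  (forall x A, A \in edges e -> lv x <> le A) /\
  (forall x, 1 <= lv x <= N) /\
  (forall A, A \in edges e -> 1 <= le A <= N) /\
  (forall x, lv x <= #|T|) /\
  exists c, forall V' E', iso_subgraph eH e V' E' ->
        \sum_(v in V') lv v + \sum_(A in E') le A = c.

Definition H_supermagic (TH : finType) (eH : rel TH) (T : finType) (e : rel T) : Prop :=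
  H_covering eH e /\ exists lv le, H_supermagic_labeling eH e lv le.

Definition C4_adj : rel 'I_4 :=
  fun i j => (j == (i.+1 %% 4) :> nat) || (i == (j.+1 %% 4) :> nat).

(* Book graph B_n: vertices inl false = u1, inl true = u2,
   inr (i,false) = v_i, inr (i,true) = w_i.
   Edges u1u2, u1w_i, u2v_i, v_iw_i. *)
Definition book_vertex (n : nat) := (bool + 'I_n * bool)%type.

Definition book_adj (n : nat) : rel (book_vertex n) :=
  fun x y => match x, y with
  | inl a, inl b => a != b
  | inl a, inr (_, c) => a != c
  | inr (_, c), inl a => a != c
  | inr (i, c), inr (j, d) => (i == j) && (c != d)
  end.

Definition copies (m : nat) (T : finType) (e : rel T) : rel ('I_m * T)%type :=
  fun p q => (p.1 == q.1) && e p.2 q.2.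

From mathcomp Require Import all_boot zify.
Set Implicit Arguments. Unset Strict Implicit. Unset Printing Implicit Defensive.

(* The copies of C_4 in mB_n are exactly the pages {u1, u2, v_k, w_k} of the
   copies of B_n, each with its four edges.  Give each of the 5n + 3 vertices
   and edges x of B_n a level l(x), with the 2n + 2 vertices on the lowest
   levels, and an orientation; copy j of x gets the label
   m l(x) + 1 + (j or m - 1 - j, according to the orientation).  On every page
   both orientations occur twice among the vertices and twice among the edges,
   so the copy index cancels from the weight, and the levels of a page add up
   to a constant: l(v_k) + l(w_k) = 2n - 1, and the ranks of the edges
   u2 v_k, v_k w_k, w_k u1 form three columns with constant row sum. *)

Lemma big_set2 (T : finType) (a b : T) (F : T -> nat) :
  a != b -> \sum_(x in [set a; b]) F x = F a + F b.
Proof. by move=> neq_ab; rewrite big_setU1 ?big_set1 // inE. Qed.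

Lemma big_set4 (T : finType) (a b c d : T) (F : T -> nat) : uniq [:: a; b; c; d] ->
  \sum_(x in [set a; b; c; d]) F x = F a + F b + F c + F d.
Proof.
move=> abcd; rewrite (eq_bigl (mem [:: a; b; c; d])) => [|x]; last by rewrite !inE -!orbA.
by rewrite -big_uniq //= !big_cons big_nil addn0 !addnA.
Qed.

Lemma card_set4 (T : finType) (a b c d : T) : #|[set a; b; c; d]| <= 4.
Proof.
rewrite (@eq_card _ _ (mem [:: a; b; c; d])) ?card_size // => x.
by rewrite !inE -!orbA.
Qed.

Lemma imset_set2 (aT rT : finType) (f : aT -> rT) a b : f @: [set a; b] = [set f a; f b].
Proof. by rewrite imsetU1 imset_set1. Qed.

Lemma edge_set2 (T : finType) (e : rel T) x y : e x y -> [set x; y] \in edges e.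
Proof.
by move=> exy; rewrite inE; apply/existsP; exists x; apply/existsP; exists y; rewrite exy /=.
Qed.

Local Notation c4 k := (@Ordinal 4 k isT).

Lemma setT_ord4 : [set: 'I_4] = [set c4 0; c4 1; c4 2; c4 3].
Proof. by apply/setP => -[[|[|[|[|]]]] ?] //; rewrite !inE. Qed.

Lemma card_edges_C4 : 4 <= #|edges C4_adj|.
Proof.
have side_inj : injective (fun i : 'I_4 => [set i; ordS i]).
  move=> i i' /setP eq_ii'; apply/eqP.
  have := eq_ii' i; have := eq_ii' i'; rewrite !inE !eqxx /= ?orbT.
  by case: i {eq_ii'} => [[|[|[|[|]]]] ?]; case: i' => [[|[|[|[|]]]] ?].
rewrite -[X in X <= _](card_ord 4) -cardsT -(card_imset _ side_inj).
apply/subset_leq_card/subsetP => _ /imsetP [i _ ->]; apply: edge_set2.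
by case: i => [[|[|[|[|]]]]].
Qed.

Section SimpleGraph.
Variables (T : finType) (e : rel T).
Hypothesis e_sym : symmetric e.

Definition cycle4 (a0 a1 a2 a3 : T) : bool :=
  [&& e a0 a1, e a1 a2, e a2 a3, e a3 a0 & uniq [:: a0; a1; a2; a3]].

Lemma cycle4_rot a0 a1 a2 a3 : cycle4 a0 a1 a2 a3 = cycle4 a1 a2 a3 a0.
Proof.
rewrite /cycle4 -(rot_uniq 1 [:: a0; a1; a2; a3]).
by apply/and5P/and5P => -[? ? ? ? ?].
Qed.

Lemma cycle4_diag a0 a1 a2 a3 : cycle4 a0 a1 a2 a3 -> (a0 != a2) && (a1 != a3).
Proof.
case/and5P=> _ _ _ _; rewrite /= !inE !negb_or.
by case/and4P=> /and3P [_ -> _] /andP [_ ->].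
Qed.

Lemma edge_adj x y : x != y -> [set x; y] \in edges e -> e x y.
Proof.
move=> neq_xy; rewrite inE => /existsP [x' /existsP [y' /andP [e_xy' /eqP xy_def]]].
have: (x \in [set x'; y']) && (y \in [set x'; y']) by rewrite -xy_def !inE !eqxx orbT.
rewrite !inE => /andP [/orP [] /eqP x_def /orP [] /eqP y_def];
  by move: neq_xy; rewrite x_def y_def ?eqxx // e_sym.
Qed.

Lemma C4_subgraph_cycle V' E' : iso_subgraph C4_adj e V' E' ->
  exists a0 a1 a2 a3, cycle4 a0 a1 a2 a3 /\ V' = [set a0; a1; a2; a3].
Proof.
case=> sub [phi [phi_inj [-> E'_def]]].
have adj a b : C4_adj a b -> e (phi a) (phi b).
  move=> ab; apply: edge_adj.
    by rewrite (inj_eq phi_inj); apply: contraTneq ab => ->; case: b => [[|[|[|[|]]]]].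
  by rewrite -imset_set2 (subsetP sub) // E'_def imset_f // edge_set2.
exists (phi (c4 0)), (phi (c4 1)), (phi (c4 2)), (phi (c4 3)); split.
  by rewrite /cycle4 !adj //= !inE !(inj_eq phi_inj).
by rewrite setT_ord4 !imsetU !imset_set1.
Qed.

(* Both inclusions are equalities by counting: #|V'| = 4 and #|E'| >= 4. *)
Lemma C4_subgraph_page V' E' (P : {set T}) : iso_subgraph C4_adj e V' E' ->
  V' \subset P -> #|P| <= 4 -> #|[set A in edges e | A \subset P]| <= 4 ->
  V' = P /\ E' = [set A in edges e | A \subset P].
Proof.
case=> sub [phi [phi_inj [V'_def E'_def]]] sub_V'P card_P card_EP.
have V'_P : V' = P.
  by apply/eqP; rewrite eqEcard sub_V'P V'_def card_imset // cardsT card_ord.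
split=> //; apply/eqP; rewrite eqEcard; apply/andP; split.
  apply/subsetP => A A_E'; rewrite inE (subsetP sub) //= -V'_P V'_def.
  by move: A_E'; rewrite E'_def => /imsetP [B _ ->]; apply: imsetS; apply: subsetT.
apply: leq_trans card_EP _; rewrite E'_def card_imset; first exact: card_edges_C4.
exact: imset_inj.
Qed.

Lemma cycle4_cover a0 a1 a2 a3 A : cycle4 a0 a1 a2 a3 ->
  A \in [set [set a0; a1]; [set a1; a2]; [set a2; a3]; [set a3; a0]] ->
  exists V' E', iso_subgraph C4_adj e V' E' /\ A \in E'.
Proof.
case/and5P=> e01 e12 e23 e30 uniq_a A_side.
pose phi (i : 'I_4) := nth a0 [:: a0; a1; a2; a3] i.
have phi_inj : injective phi.
  by move=> i j /eqP; rewrite nth_uniq // => /eqP/val_inj.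
pose E' := [set phi @: B | B : {set 'I_4} in edges C4_adj].
have side a b : C4_adj a b -> [set phi a; phi b] \in E'.
  by move=> ab; rewrite -imset_set2 imset_f // edge_set2.
exists (phi @: setT), E'; split.
  split; last by exists phi.
  apply/subsetP => _ /imsetP [B + ->]; rewrite inE.
  case/existsP=> a /existsP [b /andP [ab /eqP ->]]; rewrite imset_set2; apply: edge_set2.
  by case: a ab => [[|[|[|[|]]]] ?]; case: b => [[|[|[|[|]]]] ?] //= _; rewrite // e_sym.
move: A_side; rewrite !inE -!orbA => /or4P [] /eqP ->.
- exact: (side (c4 0) (c4 1)).
- exact: (side (c4 1) (c4 2)).
- exact: (side (c4 2) (c4 3)).
- exact: (side (c4 3) (c4 0)).
Qed.

End SimpleGraph.

Definition label (m j : nat) (o : bool) (k : nat) : nat :=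
  m * k + (if o then j else m.-1 - j) + 1.

Lemma label_gt0 m j o k : 0 < label m j o k.
Proof. by rewrite /label addn1. Qed.

Lemma label_le m j o k : j < m -> label m j o k <= m * k.+1.
Proof. by rewrite /label mulnSr => lt_jm; case: o; lia. Qed.

Lemma label_lt m j j' o o' k k' : j < m -> j' < m -> k < k' ->
  label m j o k < label m j' o' k'.
Proof.
move=> lt_jm lt_j'm lt_kk'; have := label_le o k lt_jm.
have: m * k.+1 <= m * k' by rewrite leq_mul2l lt_kk' orbT.
by rewrite /label; lia.
Qed.

Lemma label_inj m j j' o o' k k' : j < m -> j' < m ->
  label m j o k = label m j' o' k' -> k = k' /\ (o = o' -> j = j').
Proof.
move=> lt_jm lt_j'm eq_label.
have eq_kk' : k = k'.
  case: (ltngtP k k') => // [lt_kk' | lt_k'k].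
    by have := label_lt o o' lt_jm lt_j'm lt_kk'; rewrite eq_label ltnn.
  by have := label_lt o' o lt_j'm lt_jm lt_k'k; rewrite eq_label ltnn.
split=> // eq_oo'; move: eq_label; rewrite /label eq_kk' {}eq_oo'; case: o'; lia.
Qed.

(* i, wu_rank n i and vw_rank n i (for i < n) are three columns with constant
   row sum; uu_rank n is the one value in [0, n] that wu_rank n misses. *)
Definition vw_rank n i :=
  if i < n - n./2 then n + odd n - 2 - 2 * i else 2 * n - 1 - 2 * i.
Definition wu_rank n i :=
  if i < n - n./2 then i + n./2 + ~~ odd n else i - (n - n./2).
Definition uu_rank n := if odd n then n else n./2.

Lemma vw_rank_lt n i : i < n -> vw_rank n i < n.
Proof. by rewrite /vw_rank; have := odd_double_half n; case: ifP; lia. Qed.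

Lemma vw_rank_inj n i i' : i < n -> i' < n -> vw_rank n i = vw_rank n i' -> i = i'.
Proof. by rewrite /vw_rank; have := odd_double_half n; do 2 case: ifP; lia. Qed.

Lemma wu_rank_le n i : i < n -> wu_rank n i <= n.
Proof. by rewrite /wu_rank; have := odd_double_half n; case: ifP; case: odd; lia. Qed.

Lemma wu_rank_inj n i i' : i < n -> i' < n -> wu_rank n i = wu_rank n i' -> i = i'.
Proof. by rewrite /wu_rank; do 2 case: ifP; lia. Qed.

Lemma wu_rank_neq_uu n i : i < n -> wu_rank n i != uu_rank n.
Proof.
by rewrite /wu_rank /uu_rank; have := odd_double_half n; case: ifP; case: odd; lia.
Qed.

Lemma uu_rank_le n : uu_rank n <= n.
Proof. by rewrite /uu_rank; case: odd; lia. Qed.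

Lemma rank_sum n i : i < n -> i + wu_rank n i + vw_rank n i = 3 * n./2 - ~~ odd n.
Proof.
by rewrite /wu_rank /vw_rank; have := odd_double_half n; case: ifP; case: odd; lia.
Qed.

Section BookGraph.
Variable n : nat.
Implicit Types (i k : 'I_n) (x y : book_vertex n).

Lemma book_adj_sym : symmetric (@book_adj n).
Proof.
case=> [a|[i c]] [b|[i' d]] //=; first by rewrite eq_sym.
by rewrite [i' == i]eq_sym [d == c]eq_sym.
Qed.

Lemma book_adj_irr : irreflexive (@book_adj n).
Proof. by case=> [a|[i c]] /=; rewrite !eqxx. Qed.

Definition on_page k x : bool := if x is inr (i, _) then i == k else true.

Lemma on_page_nbr k c y : book_adj (inr (k, c)) y -> on_page k y.
Proof. by case: y => [a|[i d]] //= /andP [/eqP ->]. Qed.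

Lemma on_page_common_nbr k x y1 y2 : y1 != y2 -> on_page k y1 -> on_page k y2 ->
  book_adj x y1 -> book_adj x y2 -> on_page k x.
Proof.
case: x => [//|[i c]] /=.
case: y1 => [a1|[i1 c1]]; last by move=> _ /= /eqP -> _ /andP [/eqP ->].
case: y2 => [a2|[i2 c2]]; last by move=> _ _ /= /eqP -> _ /andP [/eqP ->].
by case: a1 a2 c => [] [] [].
Qed.

Lemma book_cycle4_page b0 b1 b2 b3 : cycle4 (@book_adj n) b0 b1 b2 b3 ->
  exists k, [/\ on_page k b0, on_page k b1, on_page k b2 & on_page k b3].
Proof.
have from_rim k c y1 y2 y3 : cycle4 (@book_adj n) (inr (k, c)) y1 y2 y3 ->
    [/\ on_page k (inr (k, c)), on_page k y1, on_page k y2 & on_page k y3].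
  move=> cyc; have /andP [_ n13] := cycle4_diag cyc.
  case/and5P: cyc => a1 a12 a23 a3 _.
  have p1 := on_page_nbr a1.
  have p3 : on_page k y3 by apply: (on_page_nbr (c := c)); rewrite book_adj_sym.
  split=> //=.
  by apply: on_page_common_nbr n13 p1 p3 _ a23; rewrite book_adj_sym.
case: b0 => [a0|[k c]] cyc; first last.
  by exists k; apply: from_rim cyc.
case: b1 cyc => [a1|[k c]] cyc; first last.
  by exists k; rewrite cycle4_rot in cyc; have [] := from_rim _ _ _ _ _ cyc.
case: b2 cyc => [a2|[k c]] cyc; first last.
  by exists k; rewrite 2!cycle4_rot in cyc; have [] := from_rim _ _ _ _ _ cyc.
have /andP [n02 _] := cycle4_diag cyc; case/and5P: cyc => a01 a12 _ _ _.
by move: a01 a12 n02 => /=; case: a0 a1 a2 => [] [] [].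
Qed.

(* [None] is u1 u2, [Some (i, None)] is u2 v_i, [Some (i, Some false)] is v_i w_i
   and [Some (i, Some true)] is w_i u1; edge_ends orients every edge along the
   cycle u1 u2 v_i w_i of its page, and arc_type inverts edge_ends. *)
Definition book_edge_type := option ('I_n * option bool).

Definition edge_ends (t : book_edge_type) : book_vertex n * book_vertex n :=
  match t with
  | None => (inl false, inl true)
  | Some (i, None) => (inl true, inr (i, false))
  | Some (i, Some false) => (inr (i, false), inr (i, true))
  | Some (i, Some true) => (inr (i, true), inl false)
  end.

Definition arc_type x y : option book_edge_type :=
  match x, y with
  | inl false, inl true => Some None
  | inl true, inr (i, false) => Some (Some (i, None))
  | inr (i, false), inr (i', true) =>
      if i == i' then Some (Some (i, Some false)) else None
  | inr (i, true), inl false => Some (Some (i, Some true))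
  | _, _ => None
  end.

Lemma arc_type_ends t : arc_type (edge_ends t).1 (edge_ends t).2 = Some t.
Proof. by case: t => [[i [[]|]]|] //=; rewrite eqxx. Qed.

Lemma arc_type_rev t : arc_type (edge_ends t).2 (edge_ends t).1 = None.
Proof. by case: t => [[i [[]|]]|]. Qed.

Lemma arc_type_diag x : arc_type x x = None.
Proof. by case: x => [[]|[i []]] //=; rewrite eqxx. Qed.

Lemma edge_ends_adj t : book_adj (edge_ends t).1 (edge_ends t).2.
Proof. by case: t => [[i [[]|]]|] //=; rewrite eqxx. Qed.

Lemma book_adj_ends x y : book_adj x y ->
  exists t, edge_ends t = (x, y) \/ edge_ends t = (y, x).
Proof.
move=> adj_xy; exists (if arc_type x y is Some t then t else odflt None (arc_type y x)).
move: adj_xy; case: x => [[]|[i []]]; case: y => [[]|[i' []]] //=.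
all: rewrite ?andbT ?andbF //; (move=> /eqP <- || move=> _); rewrite /= ?eqxx /=.
all: first [by left | by right].
Qed.

Definition vertex_level x : nat :=
  match x with
  | inl false => 2 * n
  | inl true => 2 * n + 1
  | inr (i, false) => i
  | inr (i, true) => 2 * n - 1 - i
  end.

Definition vertex_orient x : bool := match x with inl b | inr (_, b) => ~~ b end.

Definition edge_level (t : book_edge_type) : nat :=
  match t with
  | None => 2 * n + uu_rank n
  | Some (i, None) => i
  | Some (i, Some false) => n + vw_rank n i
  | Some (i, Some true) => 2 * n + wu_rank n i
  end.

Definition edge_orient (t : book_edge_type) : bool :=
  if t is Some (_, Some _) then false else true.

Lemma vertex_level_lt x : vertex_level x < 2 * n + 2.
Proof. by case: x => [[]|[i []]] /=; try have := ltn_ord i; lia. Qed.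

Lemma vertex_level_inj : injective vertex_level.
Proof.
case=> [[]|[i []]] [[]|[i' []]] //=.
all: try have := ltn_ord i; try have := ltn_ord i'; try lia.
all: by move=> *; congr (inr (_, _)); apply: val_inj => /=; lia.
Qed.

Lemma edge_level_lt t : edge_level t < 3 * n + 1.
Proof.
case: t => [[i [[]|]]|] /=.
- by have := wu_rank_le (ltn_ord i); lia.
- by have := vw_rank_lt (ltn_ord i); lia.
- by have := ltn_ord i; lia.
- by have := uu_rank_le n; lia.
Qed.

Lemma edge_level_inj : injective edge_level.
Proof.
case=> [[i [[]|]]|] [[i' [[]|]]|] //= eq_level; have ? := uu_rank_le n.
all: try have ? := ltn_ord i; try have ? := wu_rank_le (ltn_ord i);
  try have ? := vw_rank_lt (ltn_ord i); try have ? := wu_rank_neq_uu (ltn_ord i).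
all: try have ? := ltn_ord i'; try have ? := wu_rank_le (ltn_ord i');
  try have ? := vw_rank_lt (ltn_ord i'); try have ? := wu_rank_neq_uu (ltn_ord i').
all: first [lia | congr (Some (_, _)); apply: val_inj].
- exact: wu_rank_inj (ltn_ord i) (ltn_ord i') (addnI eq_level).
- exact: vw_rank_inj (ltn_ord i) (ltn_ord i') (addnI eq_level).
- exact: eq_level.
Qed.

End BookGraph.

Section Copies.
Variables m n : nat.
Local Notation G := (@copies m _ (@book_adj n)).
Implicit Types (j : 'I_m) (k : 'I_n) (t : book_edge_type n).

Lemma copies_sym : symmetric G.
Proof. by move=> x y; rewrite /copies eq_sym book_adj_sym. Qed.

Definition page j k : {set 'I_m * book_vertex n} :=
  [set x | (x.1 == j) && on_page k x.2].

Lemma page_enum j k : page j k =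
  [set (j, inl false); (j, inl true); (j, inr (k, false)); (j, inr (k, true))].
Proof.
apply/setP => -[j' x]; rewrite !inE !xpair_eqE /=.
case: (j' == j); rewrite /= ?andbF //.
case: x => [[]|[k' []]] //=.
all: by rewrite !(inj_eq inr_inj) !xpair_eqE /= ?andbT ?andbF ?orbF.
Qed.

Lemma cycle4_page a0 a1 a2 a3 : cycle4 G a0 a1 a2 a3 ->
  exists j k, [set a0; a1; a2; a3] \subset page j k.
Proof.
case: a0 a1 a2 a3 => [j b0] [j1 b1] [j2 b2] [j3 b3].
case/and5P=> /andP [/eqP /= <- a01] /andP [/eqP /= <- a12] /andP [/eqP /= <- a23].
case/andP=> _ a30 uniq_a.
have uniq_b : uniq [:: b0; b1; b2; b3].
  by rewrite -(map_inj_uniq (f := pair j)) => [|? ? []].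
have cyc_b : cycle4 (@book_adj n) b0 b1 b2 b3 by apply/and5P.
have [k [p0 p1 p2 p3]] := book_cycle4_page cyc_b.
exists j, k; apply/subsetP => x; rewrite !inE -!orbA.
by case/or4P => /eqP -> /=; rewrite eqxx.
Qed.

Definition book_edge j t : {set 'I_m * book_vertex n} :=
  [set (j, (edge_ends t).1); (j, (edge_ends t).2)].

Lemma book_edge_edges j t : book_edge j t \in edges G.
Proof. by apply: edge_set2; rewrite /copies eqxx edge_ends_adj. Qed.

Lemma edges_book_edge A : A \in edges G -> exists j t, A = book_edge j t.
Proof.
rewrite inE => /existsP [[j x] /existsP [[j' y] /andP [/andP [/eqP /= <- adj_xy]]]].
move/eqP=> ->.
have [t [ends_t | ends_t]] := book_adj_ends adj_xy; exists j, t;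
  by rewrite /book_edge ends_t // setUC.
Qed.

Definition page_types k : {set book_edge_type n} :=
  [set None; Some (k, None); Some (k, Some false); Some (k, Some true)].

Definition page_edges j k := [set book_edge j t | t in page_types k].

Lemma book_edge_sub_page j j' k t :
  (book_edge j' t \subset page j k) = (j' == j) && (t \in page_types k).
Proof.
rewrite subUset !sub1set !inE /=.
case: t => [[i [[]|]]|] /=; case: (j' == j) => //=.
all: by rewrite ?(inj_eq Some_inj) ?xpair_eqE ?andbT ?andbF ?orbF ?andbb.
Qed.

Lemma induced_page_edges j k : [set A in edges G | A \subset page j k] = page_edges j k.
Proof.
apply/setP => A; rewrite inE.
apply/andP/imsetP => [[/edges_book_edge [j' [t ->]]] | [t t_k ->]].
  by rewrite book_edge_sub_page => /andP [/eqP -> t_k]; exists t.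
by rewrite book_edge_edges book_edge_sub_page eqxx.
Qed.

Lemma card_page_edges j k : #|page_edges j k| <= 4.
Proof. exact: leq_trans (leq_imset_card _ _) (card_set4 _ _ _ _). Qed.

Definition vertex_label (x : 'I_m * book_vertex n) : nat :=
  label m x.1 (vertex_orient x.2) (vertex_level x.2).

Definition type_label j t : nat := label m j (edge_orient t) (2 * n + 2 + edge_level t).

(* A 2-set {x, y} gets the label of the edge type whose arc is (x, y) or
   (y, x): arc_type vanishes on the other order and on the diagonal. *)
Definition edge_label (A : {set 'I_m * book_vertex n}) : nat :=
  \sum_(x in A) \sum_(y in A) oapp (type_label x.1) 0 (arc_type x.2 y.2).

Lemma edge_label_book_edge j t : edge_label (book_edge j t) = type_label j t.
Proof.
have ends_neq : (j, (edge_ends t).1) != (j, (edge_ends t).2).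
  rewrite xpair_eqE eqxx /=.
  by apply: contraTneq (edge_ends_adj t) => ->; rewrite book_adj_irr.
rewrite /edge_label big_set2 // !big_set2 //= arc_type_ends arc_type_rev !arc_type_diag /=.
by rewrite addn0 add0n addn0.
Qed.

Lemma type_label_inj j j' t t' : type_label j t = type_label j' t' -> j = j' /\ t = t'.
Proof.
case/(label_inj (ltn_ord j) (ltn_ord j')) => /addnI /edge_level_inj eq_tt' eq_jj'.
by split=> //; apply/val_inj/eq_jj'; rewrite eq_tt'.
Qed.

Lemma book_edge_inj j j' t t' : book_edge j t = book_edge j' t' -> j = j' /\ t = t'.
Proof. by move/(congr1 edge_label); rewrite !edge_label_book_edge => /type_label_inj. Qed.

Lemma vertex_label_inj : injective vertex_label.
Proof.
move=> [j x] [j' x']; rewrite /vertex_label /=.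
case/(label_inj (ltn_ord j) (ltn_ord j')) => /vertex_level_inj <- eq_jj'.
by rewrite (val_inj (eq_jj' erefl)).
Qed.

Lemma vertex_label_lt_type_label x j t : vertex_label x < type_label j t.
Proof. by apply: label_lt; rewrite ?ltn_ord //; have := vertex_level_lt x.2; lia. Qed.

Definition magic_constant :=
  m * (19 * n + 8 + uu_rank n + (3 * n./2 - ~~ odd n)) + 4 * m.-1 + 8.

Lemma page_weight j k :
  \sum_(x in page j k) vertex_label x + \sum_(A in page_edges j k) edge_label A =
  magic_constant.
Proof.
rewrite page_enum big_set4; last first.
  by rewrite /= !inE !xpair_eqE !(inj_eq inl_inj) !(inj_eq inr_inj) !xpair_eqE !eqxx.
rewrite big_imset /=; last by move=> t t' _ _ /book_edge_inj [].
rewrite big_set4 /=; last by rewrite !inE !(inj_eq Some_inj) !xpair_eqE !eqxx.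
rewrite !edge_label_book_edge /vertex_label /type_label /=.
have lt_jm := ltn_ord j; have lt_kn := ltn_ord k.
have levels : 2 * n + (2 * n + 1) + k + (2 * n - 1 - k) + (2 * n + 2 + (2 * n + uu_rank n)) +
    (2 * n + 2 + k) + (2 * n + 2 + (n + vw_rank n k)) + (2 * n + 2 + (2 * n + wu_rank n k)) =
    19 * n + 8 + uu_rank n + (3 * n./2 - ~~ odd n).
  by have := rank_sum lt_kn; lia.
by rewrite /magic_constant -levels /label !mulnDr; lia.
Qed.

Lemma C4_weight V' E' : iso_subgraph C4_adj G V' E' ->
  \sum_(x in V') vertex_label x + \sum_(A in E') edge_label A = magic_constant.
Proof.
move=> sub_C4; have [a0 [a1 [a2 [a3 [cyc V'_def]]]]] := C4_subgraph_cycle copies_sym sub_C4.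
have [j [k sub_page]] := cycle4_page cyc.
have [|||-> ->] := C4_subgraph_page sub_C4 (P := page j k).
- by rewrite V'_def.
- by rewrite page_enum card_set4.
- by rewrite induced_page_edges card_page_edges.
by rewrite induced_page_edges page_weight.
Qed.

Lemma book_covering : 0 < n -> H_covering C4_adj G.
Proof.
move=> n_gt0 A /edges_book_edge [j [t ->]].
pose k := if t is Some (i, _) then i else Ordinal n_gt0.
have cyc : cycle4 G (j, inl false) (j, inl true) (j, inr (k, false)) (j, inr (k, true)).
  rewrite /cycle4 /copies /= !eqxx /= !inE !xpair_eqE.
  by rewrite !(inj_eq inl_inj) !(inj_eq inr_inj) !xpair_eqE !eqxx.
apply: (cycle4_cover copies_sym cyc); clear cyc.
by case: t @k => [[i [[]|]]|] k; rewrite !inE /book_edge /= eqxx ?orbT.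
Qed.

Lemma card_vertices : #|{: 'I_m * book_vertex n}| = m * (2 * n + 2).
Proof.
by rewrite card_prod card_sum card_bool card_prod !card_ord card_bool; congr (_ * _); lia.
Qed.

Lemma card_edges_ge : m * (3 * n + 1) <= #|edges G|.
Proof.
have edge_inj : injective (fun p : 'I_m * book_edge_type n => book_edge p.1 p.2).
  by move=> [j t] [j' t'] /book_edge_inj /= [-> ->].
have card_img := card_imset [set: 'I_m * book_edge_type n] edge_inj.
rewrite cardsT card_prod card_option card_prod !card_ord card_option card_bool in card_img.
rewrite addn1 [3 * n]mulnC -card_img.
by apply/subset_leq_card/subsetP => _ /imsetP [[j t] _ ->]; apply: book_edge_edges.
Qed.

Lemma book_supermagic_labeling : H_supermagic_labeling C4_adj G vertex_label edge_label.
Proof.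
have vertex_label_le x : vertex_label x <= #|{: 'I_m * book_vertex n}|.
  rewrite card_vertices; apply: leq_trans (label_le _ _ (ltn_ord x.1)) _.
  by rewrite leq_mul2l vertex_level_lt orbT.
have type_label_le j t : type_label j t <= #|{: 'I_m * book_vertex n}| + #|edges G|.
  apply: leq_trans (label_le _ _ (ltn_ord j)) _.
  apply: leq_trans (leq_add (leqnn _) card_edges_ge).
  by rewrite card_vertices -mulnDr leq_mul2l; have := edge_level_lt t; lia.
split; first exact: vertex_label_inj.
split.
  move=> _ _ /edges_book_edge [j [t ->]] /edges_book_edge [j' [t' ->]].
  by rewrite !edge_label_book_edge => /type_label_inj [-> ->].
split.
  move=> x _ /edges_book_edge [j [t ->]]; rewrite edge_label_book_edge.
  by apply/eqP; rewrite neq_ltn vertex_label_lt_type_label.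
split; first by move=> x; rewrite label_gt0 (leq_trans (vertex_label_le x)) ?leq_addr.
split.
  move=> _ /edges_book_edge [j [t ->]].
  by rewrite edge_label_book_edge type_label_le andbT label_gt0.
split; first exact: vertex_label_le.
by exists magic_constant => V' E'; apply: C4_weight.
Qed.

End Copies.

Theorem theorem7 (m n : nat) : 2 <= m -> 2 <= n ->
  H_supermagic C4_adj (@copies m _ (@book_adj n)).
Proof.
(* The labeling works for every m; n > 0 is only needed for the covering. *)
move=> _ n_ge2; split; first by apply: book_covering; lia.
by exists (@vertex_label m n), (@edge_label m n); apply: book_supermagic_labeling.
Qed.
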